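(* Under Assumptions 1-MP, 2-MP(a) and 3-MP, $$\frac1{\mathcal{T}}\sum_{t=1}^{\mathcal{T}}\mathbb{E}[\ddot W_t^2]=\sum_{g\in\mathcal{G}}\tilde w^{g,within}(g)+\sum_{g\in\mathcal{G}}\sum_{k\in\mathcal{G},k>g}\big\{\tilde w^{g,post}(g,k)+\tilde w^{k,post}(g,k)+\tilde w^{long}(g,k)\big\}.$$
   Context: Multi-period setup: periods $t=1,\dots,\mathcal{T}$; timing group $G\in\mathcal{G}\subseteq\{2,\dots,\mathcal{T}+1\}$ ($G=\mathcal{T}+1$: never treated), dose $D\ge0$ with $D=0$ exactly for never-treated units; $W_t:=D\mathbf{1}\{t\ge G\}$. 1-MP: i.i.d. sampling of $(Y_1,\dots,Y_{\mathcal{T}},D,G)$, $D$ square-integrable. 2-MP(a): support of $D$ is $\{0\}\cup\mathcal{D}_+$, $\mathcal{D}_+\subset(0,\infty)$, $\mathbb{P}(D=0)>0$. 3-MP: no anticipation and staggered adoption ($W_1=0$, $W_{t-1}=d\Rightarrow W_t=d$). $\bar W_i:=\frac1{\mathcal{T}}\sum_tW_{it}$, $\ddot W_{it}:=(W_{it}-\bar W_i)-(\mathbb{E}[W_t]-\frac1{\mathcal{T}}\sum_s\mathbb{E}[W_s])$. $p_g:=\mathbb{P}(G=g)$, $\bar G_g:=(\mathcal{T}-g+1)/\mathcal{T}$. $\tilde w^{g,within}(g):=\mathrm{var}(D\mid G=g)(1-\bar G_g)\bar G_g\,p_g$; $\tilde w^{g,post}(g,k):=\mathbb{E}[D\mid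 G=g]^2(1-\bar G_g)(\bar G_g-\bar G_k)p_gp_k$; $\tilde w^{k,post}(g,k):=\mathbb{E}[D\mid G=k]^2\bar G_k(\bar G_g-\bar G_k)p_gp_k$; $\tilde w^{long}(g,k):=(\mathbb{E}[D\mid G=g]-\mathbb{E}[D\mid G=k])^2\bar G_k(1-\bar G_g)p_gp_k$. *)

From HB Require Import structures.
From mathcomp Require Import all_boot all_order all_algebra.
From mathcomp Require Import all_classical all_reals all_analysis.
Set Implicit Arguments. Unset Strict Implicit. Unset Printing Implicit Defensive.
Import Order.TTheory GRing.Theory Num.Theory.
Local Open Scope ring_scope.

Section defs.
Context {d : measure_display} {Omega : measurableType d} {R : realType}.
Variable (P : probability Omega R).
Variable (TT : nat) (G : Omega -> nat) (D : Omega -> R).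

(* real-valued expectation (finite under square integrability) *)
Definition Er (X : Omega -> R) : R := fine ('E_P[X])%E.

Definition Wt (t : nat) : Omega -> R := fun w => if (G w <= t)%N then D w else 0.

Definition Wbar : Omega -> R := fun w => TT%:R^-1 * \sum_(1 <= t < TT.+1) Wt t w.

Definition Wdd (t : nat) : Omega -> R := fun w =>
  (Wt t w - Wbar w) - (Er (Wt t) - TT%:R^-1 * \sum_(1 <= s < TT.+1) Er (Wt s)).

Definition pg (g : nat) : R := fine (P [set w | G w = g]%classic).

Definition condE (X : Omega -> R) (g : nat) : R :=
  Er (fun w => X w * (G w == g)%:R) / pg g.

Definition EDg (g : nat) : R := condE D g.
Definition varDg (g : nat) : R := condE (fun w => (D w - EDg g) ^+ 2) g.

Definition Gbar (g : nat) : R := (TT%:R - g%:R + 1) / TT%:R.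

Definition w_within (g : nat) : R :=
  varDg g * (1 - Gbar g) * Gbar g * pg g.
Definition w_gpost (g k : nat) : R :=
  EDg g ^+ 2 * (1 - Gbar g) * (Gbar g - Gbar k) * pg g * pg k.
Definition w_kpost (g k : nat) : R :=
  EDg k ^+ 2 * Gbar k * (Gbar g - Gbar k) * pg g * pg k.
Definition w_long (g k : nat) : R :=
  (EDg g - EDg k) ^+ 2 * Gbar k * (1 - Gbar g) * pg g * pg k.

End defs.

From HB Require Import structures.
From mathcomp Require Import all_boot all_order all_algebra.
From mathcomp Require Import all_classical all_reals all_analysis.
From mathcomp Require Import ring lra zify.
Import Order.TTheory GRing.Theory Num.Theory.
Set Implicit Arguments. Unset Strict Implicit.
Local Open Scope ring_scope.

(* Under staggered adoption W_t = D 1{G <= t} and Wbar = D Gbar_G, so the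
   demeaned treatment is Wdd_t = D dev(G, t) - e_t, where
   dev(g, t) = 1{g <= t} - Gbar_g is the centred adoption indicator and
   e_t = sum_g dev(g, t) E[D 1{G = g}] is its mean.  Hence
   E[Wdd_t^2] = sum_g dev(g, t)^2 E[D^2 1{G = g}] - e_t^2.  Averaging over t
   only involves the time covariances
   (1/T) sum_t dev(g, t) dev(k, t) = Gbar_{max g k} - Gbar_g Gbar_k,
   after which the identity is finite-sum algebra with E[D 1{G=g}] = mu_g p_g
   and E[D^2 1{G=g}] = (var_g + mu_g^2) p_g. *)

Section RealExpectation.
Context {d : measure_display} {Omega : measurableType d} {R : realType}.
Variable P : probability Omega R.

Lemma Lfun_scalel (k : R) (X : Omega -> R) :
  X \in Lfun P 1 -> (fun w => k * X w) \in Lfun P 1.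
Proof.
move=> hX; rewrite (_ : (fun w => k * X w) = k \o* X); last first.
  by apply/funext => w /=; rewrite mulrC.
exact: (Lfun_scale k (r:=1)).
Qed.

Lemma Er_add (X Y : Omega -> R) : X \in Lfun P 1 -> Y \in Lfun P 1 ->
  Er P (fun w => X w + Y w) = Er P X + Er P Y.
Proof.
move=> hX hY; rewrite /Er (expectationD hX hY) fineD //;
exact: expectation_fin_num.
Qed.

Lemma Er_scale (k : R) (X : Omega -> R) : X \in Lfun P 1 ->
  Er P (fun w => k * X w) = k * Er P X.
Proof.
move=> hX; rewrite /Er (_ : (fun w => k * X w) = k \o* X); last first.
  by apply/funext => w /=; rewrite mulrC.
rewrite (expectationZl _ hX).
by have := expectation_fin_num hX; case: ('E_P[X])%E.
Qed.

Lemma Er_sum (I : Type) (s : seq I) (Q : pred I) (F : I -> Omega -> R) :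
  (forall i, F i \in Lfun P 1) ->
  (fun w => \sum_(i <- s | Q i) F i w) \in Lfun P 1 /\
  Er P (fun w => \sum_(i <- s | Q i) F i w) = \sum_(i <- s | Q i) Er P (F i).
Proof.
move=> hF; elim: s => [|i s [IHint IHeq]].
  rewrite big_nil; under eq_fun do rewrite big_nil.
  by split; [exact: Lfun_cst | rewrite /Er (expectation_cst P 0)].
rewrite big_cons; under eq_fun do rewrite big_cons.
case: (Q i) => //; split; first exact: rpredD.
by rewrite Er_add // IHeq.
Qed.

End RealExpectation.

Definition moment d (Omega : measurableType d) (R : realType) (P : probability Omega R)
  (G : Omega -> nat) (D : Omega -> R) (j g : nat) : R :=
  Er P (fun w => D w ^+ j * (G w == g)%:R).

Section GroupMoments.
Context {d : measure_display} {Omega : measurableType d} {R : realType}.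
Variables (P : probability Omega R) (TT : nat) (Gs : {pred nat}).
Variables (G : Omega -> nat) (D : Omega -> R).
Hypothesis hGs : forall g, g \in Gs -> (2 <= g <= TT.+1)%N.
Hypothesis hGval : forall w, G w \in Gs.
Hypothesis hGmeas : measurable_fun setT G.
Hypothesis hDmeas : measurable_fun setT D.
Hypothesis hD2 : P.-integrable setT (fun w => (D w ^+ 2)%:E).
Hypothesis hDnn : forall w, 0 <= D w.

Local Notation mom := (moment P G D).

Lemma measurable_group (g : nat) : measurable [set w | G w = g]%classic.
Proof. by have := hGmeas measurableT (Y := [set g]%classic) I; rewrite setTI. Qed.

(* Since 0 <= D^j <= 1 + D^2 for j <= 2, square integrability of D makes
   every D^j 1{G = g} integrable. *)
Lemma moment_integrable (j g : nat) : (j <= 2)%N ->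
  (fun w => D w ^+ j * (G w == g)%:R) \in Lfun P 1.
Proof.
move=> hj; apply/Lfun1_integrable.
have hdom : P.-integrable setT (fun w => (1 + D w ^+ 2)%:E).
  have h1 : P.-integrable setT (fun w => (1%R)%:E).
    exact: finite_measure_integrable_cst.
  by have := integrableD measurableT h1 hD2; apply: eq_integrable.
apply: (le_integrable measurableT _ _ hdom).
  apply/measurable_realfun.measurable_EFinP; apply: measurable_realfun.measurable_funM.
    exact: measurable_realfun.measurable_funX.
  exact: (@measurableT_comp _ _ _ _ _ _ (fun n : nat => ((n == g)%:R : R)) _ G).
move=> w _ /=; rewrite lee_fin.
have hDw := hDnn w.
rewrite (ger0_norm (x := 1 + D w ^+ 2)); last by rewrite addr_ge0 // sqr_ge0.
case: (G w == g); rewrite ?mulr1 ?mulr0 ?normr0; last by rewrite addr_ge0 // sqr_ge0.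
rewrite ger0_norm ?exprn_ge0 //.
move: hj; case: j => [|[|[|]]] // _; rewrite ?expr0 ?expr1.
- by rewrite lerDl sqr_ge0.
- nra.
- by rewrite lerDr.
Qed.

Lemma sum_group_indicator (x : nat) (F : nat -> R) :
  x \in Gs -> \sum_(2 <= g < TT.+2 | g \in Gs) (F g * (x == g)%:R) = F x.
Proof.
move=> hx; rewrite big_mkcond (bigD1_seq x) ?mem_index_iota ?iota_uniq //=; last first.
  by have := hGs hx; lia.
rewrite hx eqxx mulr1 big1 ?addr0 // => i /negbTE; rewrite eq_sym => ->.
by case: (i \in Gs); rewrite ?mulr0.
Qed.

Lemma expectation_by_group (a b c : nat -> R) :
  Er P (fun w => a (G w) * D w ^+ 2 + b (G w) * D w + c (G w)) =
  \sum_(2 <= g < TT.+2 | g \in Gs) (a g * mom 2 g + b g * mom 1 g + c g * mom 0 g).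
Proof.
pose F g w := a g * (D w ^+ 2 * (G w == g)%:R) + b g * (D w ^+ 1 * (G w == g)%:R)
   + c g * (D w ^+ 0 * (G w == g)%:R).
have hF g : F g \in Lfun P 1.
  by rewrite /F; do 2?apply: rpredD; apply: Lfun_scalel; exact: moment_integrable.
rewrite (_ : (fun w => _) = (fun w => \sum_(2 <= g < TT.+2 | g \in Gs) F g w)); last first.
  apply/funext => w; rewrite /F.
  rewrite -(sum_group_indicator (fun g => a g * D w ^+ 2 + b g * D w + c g) (hGval w)).
  by apply: eq_bigr => g _; rewrite eq_sym expr0 expr1; ring.
rewrite (Er_sum _ _ hF).2; apply: eq_bigr => g _.
have M j : (j <= 2)%N -> (fun w => D w ^+ j * (G w == g)%:R) \in Lfun P 1.
  exact: moment_integrable.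
have kM j k : (j <= 2)%N -> (fun w => k * (D w ^+ j * (G w == g)%:R)) \in Lfun P 1.
  by move=> hj; apply: Lfun_scalel; exact: M.
rewrite /F Er_add ?kM //; last by apply: rpredD; exact: kM.
rewrite Er_add ?kM //.
by rewrite (Er_scale (a g) (M 2%N _)) // (Er_scale (b g) (M 1%N _)) // (Er_scale (c g) (M 0%N _)).
Qed.

Lemma moment0_pg (g : nat) : mom 0 g = pg P G g.
Proof.
rewrite /moment /pg /Er (_ : (fun w => _) = \1_[set w | G w = g]%classic).
  by rewrite expectation_indic //; exact: measurable_group.
apply/funext => w; rewrite indicE expr0 mul1r.
by case: eqP => h; [rewrite mem_set | rewrite memNset].
Qed.

Lemma moment_null (j g : nat) : pg P G g = 0 -> mom j g = 0.
Proof.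
move=> h0; have mA := measurable_group g.
have PA : P [set w | G w = g]%classic = 0%E.
  by rewrite -(@fineK _ (P _)) ?fin_num_measure //; move: h0; rewrite /pg => ->.
rewrite /moment /Er unlock.
rewrite (_ : (fun w => _) = ((fun x => (D x ^+ j)%:E) \_ [set w | G w = g]%classic)).
  rewrite -integral_mkcond null_set_integral //.
  apply/measurable_realfun.measurable_EFinP; apply: measurable_realfun.measurable_funX.
  exact: measurable_funS hDmeas.
apply/funext => w /=; rewrite /patch.
by case: eqP => h; [rewrite mem_set // mulr1 | rewrite memNset // mulr0].
Qed.

Lemma sum_pg : \sum_(2 <= g < TT.+2 | g \in Gs) pg P G g = 1.
Proof.
have := expectation_by_group (fun _ => 0) (fun _ => 0) (fun _ => 1).
rewrite (_ : (fun w => _) = cst 1); last by apply/funext => w; rewrite !mul0r !add0r.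
rewrite /Er expectation_cst /= => ->.
by apply: eq_bigr => g _; rewrite !mul0r !add0r mul1r moment0_pg.
Qed.

Lemma moment1_EDg (g : nat) : mom 1 g = EDg P G D g * pg P G g.
Proof.
have [h0|h0] := eqVneq (pg P G g) 0; first by rewrite h0 mulr0 moment_null.
by rewrite /EDg /condE divfK.
Qed.

Lemma varDg_moment (g : nat) : g \in Gs ->
  varDg P G D g * pg P G g = mom 2 g - EDg P G D g ^+ 2 * pg P G g.
Proof.
move=> Gg; set mu := EDg P G D g.
have [h0|h0] := eqVneq (pg P G g) 0.
  by rewrite h0 !mulr0 subr0 moment_null.
have := expectation_by_group (fun h => (h == g)%:R) (fun h => -2 * mu * (h == g)%:R)
  (fun h => mu ^+ 2 * (h == g)%:R).
rewrite (_ : (fun w => _) = fun w => (D w - mu) ^+ 2 * (G w == g)%:R); last first.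
  by apply/funext => w; ring.
rewrite /varDg /condE -/mu divfK // => ->.
rewrite (eq_bigr (fun h => (mom 2 h - 2 * mu * mom 1 h + mu ^+ 2 * mom 0 h) * (g == h)%:R))
  => [|h _]; last by rewrite eq_sym; ring.
by rewrite sum_group_indicator // moment0_pg moment1_EDg -/mu; ring.
Qed.

End GroupMoments.

Lemma count_treated_periods (R : semiRingType) (n g : nat) : (1 <= g)%N ->
  \sum_(1 <= t < n.+1) ((g <= t)%:R : R) = (n.+1 - g)%:R.
Proof.
move=> g1; elim: n => [|n IH]; first by rewrite big_geq //; case: g g1 => [|[]].
rewrite big_nat_recr //= IH -natrD; congr (_%:R).
by case: (leqP g n.+1) => h /=; lia.
Qed.

Section TimeAverages.
Variables (R : realType) (TT : nat).
Hypothesis hT : (1 <= TT)%N.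

Lemma avg_treated (g : nat) : (1 <= g <= TT.+1)%N ->
  TT%:R^-1 * \sum_(1 <= t < TT.+1) ((g <= t)%:R : R) = Gbar TT g.
Proof.
move=> /andP[g1 gT]; rewrite count_treated_periods // /Gbar natrB // -natr1.
have hT0 : (TT%:R : R) != 0 by rewrite pnatr_eq0 -lt0n.
by field.
Qed.

Definition dev (g t : nat) : R := (g <= t)%:R - Gbar TT g.

Lemma avg_dev_prod (g k : nat) : (1 <= g <= TT.+1)%N -> (1 <= k <= TT.+1)%N ->
  TT%:R^-1 * \sum_(1 <= t < TT.+1) (dev g t * dev k t) =
  Gbar TT (maxn g k) - Gbar TT g * Gbar TT k.
Proof.
move=> hg hk.
have hT0 : (TT%:R : R) != 0 by rewrite pnatr_eq0 -lt0n.
have hm : (1 <= maxn g k <= TT.+1)%N by rewrite geq_max leq_max; lia.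
have sum_treated x : (1 <= x <= TT.+1)%N ->
    \sum_(1 <= t < TT.+1) ((x <= t)%:R : R) = TT%:R * Gbar TT x.
  by move=> hx; rewrite -(avg_treated hx) mulrA divff // mul1r.
rewrite (eq_bigr (fun t => (maxn g k <= t)%:R - Gbar TT k * (g <= t)%:R
   - Gbar TT g * (k <= t)%:R + Gbar TT g * Gbar TT k)); last first.
  by move=> t _; rewrite /dev geq_max; case: (g <= t)%N; case: (k <= t)%N => /=; ring.
rewrite big_split /= !sumrB -!mulr_sumr !sum_treated // sumr_const_nat subSS subn0.
rewrite -[_ *+ TT]mulr_natr /Gbar.
by field.
Qed.

End TimeAverages.

Section SumAlgebra.
Variable R : comRingType.

Lemma sum_pairs_split (a n : nat) (Q : pred nat) (f : nat -> nat -> R) :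
  \sum_(a <= i < n | Q i) \sum_(a <= j < n | Q j) f i j =
  \sum_(a <= i < n | Q i) \sum_(a <= j < n | Q j && (i < j)%N) (f i j + f j i)
  + \sum_(a <= i < n | Q i) f i i.
Proof.
pose below i j : R := if (j < i)%N then f i j else 0.
have row i : (a <= i < n)%N -> Q i -> \sum_(a <= j < n | Q j) f i j =
    \sum_(a <= j < n | Q j && (i < j)%N) f i j + \sum_(a <= j < n | Q j) below i j + f i i.
  move=> hi Qi; rewrite (bigID (fun j => (i < j)%N)) /= -addrA; congr (_ + _).
  rewrite big_mkcond (bigD1_seq i) ?mem_index_iota ?iota_uniq //= Qi ltnn /= addrC.
  congr (_ + _); rewrite [LHS]big_mkcond [RHS]big_mkcond /=.
  apply: eq_bigr => j _; rewrite /below.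
  by case: (Q j) => //=; case: (ltngtP i j).
transitivity (\sum_(a <= i < n | Q i) (\sum_(a <= j < n | Q j && (i < j)%N) f i j +
    \sum_(a <= j < n | Q j) below i j + f i i)).
  by rewrite big_mkcond [RHS]big_mkcond; apply: eq_big_nat => i hi; case: ifP => // /row ->.
rewrite !big_split /=; congr (_ + _).
under [X in _ = X]eq_bigr do rewrite big_split /=.
rewrite big_split /=; congr (_ + _).
by rewrite exchange_big /=; apply: eq_bigr => i _; rewrite big_mkcondr.
Qed.

Lemma avg_linear (T0 : R) (a b m n : nat) (Q : pred nat) (x : nat -> R)
  (c : nat -> nat -> R) :
  T0 * \sum_(a <= t < b) \sum_(m <= g < n | Q g) c g t * x g =
  \sum_(m <= g < n | Q g) x g * (T0 * \sum_(a <= t < b) c g t).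
Proof.
transitivity (\sum_(a <= t < b) \sum_(m <= g < n | Q g) x g * (T0 * c g t)).
  by rewrite mulr_sumr; apply: eq_bigr => t _; rewrite mulr_sumr; apply: eq_bigr => g _; ring.
by rewrite exchange_big; apply: eq_bigr => g _; rewrite !mulr_sumr.
Qed.

Lemma avg_square (T0 : R) (a b m n : nat) (Q : pred nat) (x : nat -> R)
  (c : nat -> nat -> R) :
  T0 * \sum_(a <= t < b) (\sum_(m <= g < n | Q g) c g t * x g) ^+ 2 =
  \sum_(m <= g < n | Q g) \sum_(m <= k < n | Q k)
     x g * x k * (T0 * \sum_(a <= t < b) c g t * c k t).
Proof.
transitivity (\sum_(a <= t < b) \sum_(m <= g < n | Q g) \sum_(m <= k < n | Q k)
   x g * x k * (T0 * (c g t * c k t))).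
  rewrite mulr_sumr; apply: eq_bigr => t _; rewrite expr2 mulr_suml mulr_sumr.
  apply: eq_bigr => g _; rewrite !mulr_sumr; apply: eq_bigr => k _; ring.
rewrite exchange_big; apply: eq_bigr => g _; rewrite exchange_big; apply: eq_bigr => k _.
by rewrite !mulr_sumr.
Qed.

Lemma weights_decomposition (a n : nat) (Q : pred nat) (p mu q v Gb : nat -> R) :
  \sum_(a <= g < n | Q g) p g = 1 ->
  (forall g, Q g -> v g * p g = q g - mu g ^+ 2 * p g) ->
  \sum_(a <= g < n | Q g) q g * (Gb g * (1 - Gb g))
  - \sum_(a <= g < n | Q g) \sum_(a <= k < n | Q k)
      (mu g * p g) * (mu k * p k) * (Gb (maxn g k) - Gb g * Gb k)
  = \sum_(a <= g < n | Q g) v g * (1 - Gb g) * Gb g * p g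
    + \sum_(a <= g < n | Q g) \sum_(a <= k < n | Q k && (g < k)%N)
        (mu g ^+ 2 * (1 - Gb g) * (Gb g - Gb k) * p g * p k
         + mu k ^+ 2 * Gb k * (Gb g - Gb k) * p g * p k
         + (mu g - mu k) ^+ 2 * Gb k * (1 - Gb g) * p g * p k).
Proof.
move=> sum_p hv.
pose f g k := mu g ^+ 2 * p g * p k * (Gb g * (1 - Gb g))
   - (mu g * p g) * (mu k * p k) * (Gb (maxn g k) - Gb g * Gb k).
(* Using sum_k p_k = 1, the mean-dependent part of the left-hand side is the
   double sum of f. *)
have lhs_as_pairs : \sum_(a <= g < n | Q g) \sum_(a <= k < n | Q k) f g k =
  \sum_(a <= g < n | Q g) mu g ^+ 2 * p g * (Gb g * (1 - Gb g))
  - \sum_(a <= g < n | Q g) \sum_(a <= k < n | Q k)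
      (mu g * p g) * (mu k * p k) * (Gb (maxn g k) - Gb g * Gb k).
  rewrite -sumrB; apply: eq_bigr => g _; rewrite /f sumrB; congr (_ - _).
  rewrite (eq_bigr (fun k => (mu g ^+ 2 * p g * (Gb g * (1 - Gb g))) * p k)) => [|k _].
    by rewrite -mulr_sumr sum_p mulr1.
  by ring.
(* f vanishes on the diagonal, and f g k + f k g gives the three pair weights. *)
have pairs_split : \sum_(a <= g < n | Q g) \sum_(a <= k < n | Q k) f g k =
    \sum_(a <= g < n | Q g) \sum_(a <= k < n | Q k && (g < k)%N)
        (mu g ^+ 2 * (1 - Gb g) * (Gb g - Gb k) * p g * p k
         + mu k ^+ 2 * Gb k * (Gb g - Gb k) * p g * p k
         + (mu g - mu k) ^+ 2 * Gb k * (1 - Gb g) * p g * p k).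
  rewrite sum_pairs_split [X in _ + X]big1 ?addr0 => [|g _]; last by rewrite /f maxnn; ring.
  apply: eq_bigr => g _; apply: eq_bigr => k /andP[_ hgk].
  by rewrite /f (maxn_idPr (ltnW hgk)) (maxn_idPl (ltnW hgk)); ring.
rewrite -pairs_split lhs_as_pairs.
rewrite (_ : \sum_(a <= g < n | Q g) v g * (1 - Gb g) * Gb g * p g =
  \sum_(a <= g < n | Q g) q g * (Gb g * (1 - Gb g)) -
  \sum_(a <= g < n | Q g) mu g ^+ 2 * p g * (Gb g * (1 - Gb g))); first by ring.
rewrite -sumrB; apply: eq_bigr => g Qg.
have -> : v g * (1 - Gb g) * Gb g * p g = (v g * p g) * (Gb g * (1 - Gb g)) by ring.
by rewrite hv //; ring.
Qed.

End SumAlgebra.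

Lemma adoption_range (TT : nat) (Gs : {pred nat}) :
  (forall g, g \in Gs -> (2 <= g <= TT.+1)%N) ->
  forall g, g \in Gs -> (1 <= g <= TT.+1)%N.
Proof. by move=> hGs g /hGs /andP[/ltnW -> ->]. Qed.

Section DemeanedTreatment.
Context {d : measure_display} {Omega : measurableType d} {R : realType}.
Variables (P : probability Omega R) (TT : nat) (Gs : {pred nat}).
Variables (G : Omega -> nat) (D : Omega -> R).
Hypothesis hT : (1 <= TT)%N.
Hypothesis hGs : forall g, g \in Gs -> (2 <= g <= TT.+1)%N.
Hypothesis hGval : forall w, G w \in Gs.
Hypothesis hGmeas : measurable_fun setT G.
Hypothesis hDmeas : measurable_fun setT D.
Hypothesis hD2 : P.-integrable setT (fun w => (D w ^+ 2)%:E).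
Hypothesis hDnn : forall w, 0 <= D w.

Local Notation mom := (moment P G D).
Let Gs_range := adoption_range hGs.
Let by_group := expectation_by_group hGs hGval hGmeas hDmeas hD2 hDnn.

(* e_t = E[D dev(G, t)], the population mean of the centred treatment. *)
Definition trend (t : nat) : R :=
  \sum_(2 <= g < TT.+2 | g \in Gs) dev R TT g t * mom 1 g.

Lemma Wt_adopted (t : nat) (w : Omega) : Wt G D t w = D w * (G w <= t)%:R.
Proof. by rewrite /Wt; case: ifP; rewrite ?mulr1 ?mulr0. Qed.

Lemma Wbar_adopted (w : Omega) : Wbar TT G D w = D w * Gbar TT (G w).
Proof.
rewrite /Wbar (eq_bigr _ (fun t _ => Wt_adopted t w)) -mulr_sumr mulrCA.
by rewrite (avg_treated R hT) // Gs_range.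
Qed.

Lemma Er_Wt (t : nat) : Er P (Wt G D t) =
  \sum_(2 <= g < TT.+2 | g \in Gs) (g <= t)%:R * mom 1 g.
Proof.
have := by_group (fun _ => 0) (fun g => (g <= t)%:R) (fun _ => 0).
rewrite (_ : (fun w => _) = Wt G D t); last by apply/funext => w; rewrite Wt_adopted; ring.
by move=> ->; apply: eq_bigr => g _; ring.
Qed.

(* The demeaned treatment is D dev(G, t) - e_t: the unit means cancel
   D Gbar_G, and the time mean of E[W_s] cancels the Gbar_g in e_t. *)
Lemma Wdd_dev (t : nat) (w : Omega) :
  Wdd P TT G D t w = D w * dev R TT (G w) t - trend t.
Proof.
have centred_mean : Er P (Wt G D t) - TT%:R^-1 * \sum_(1 <= s < TT.+1) Er P (Wt G D s)
    = trend t.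
  rewrite Er_Wt (eq_bigr _ (fun s _ => Er_Wt s)).
  rewrite (avg_linear _ _ _ _ _ _ _ (fun g s => ((g <= s)%:R : R))) -sumrB.
  by apply: eq_bigr => g Gg; rewrite (avg_treated R hT) ?Gs_range // /dev; ring.
by rewrite /Wdd centred_mean Wt_adopted Wbar_adopted /dev; ring.
Qed.

Lemma Er_Wdd_sq (t : nat) : Er P (fun w => Wdd P TT G D t w ^+ 2) =
  \sum_(2 <= g < TT.+2 | g \in Gs) dev R TT g t ^+ 2 * mom 2 g - trend t ^+ 2.
Proof.
have := by_group
  (fun g => dev R TT g t ^+ 2) (fun g => -2 * trend t * dev R TT g t) (fun _ => trend t ^+ 2).
rewrite (_ : (fun w => _) = (fun w => Wdd P TT G D t w ^+ 2)); last first.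
  by apply/funext => w; rewrite Wdd_dev; ring.
move=> ->; rewrite !big_split /=.
rewrite [X in _ + X + _](eq_bigr (fun g => -2 * trend t * (dev R TT g t * mom 1 g)))
  => [|g _]; last by ring.
rewrite -mulr_sumr -/(trend t) -mulr_sumr.
rewrite (eq_bigr _ (fun g _ => moment0_pg P D hGmeas g)).
by rewrite (sum_pg hGs hGval hGmeas hDmeas hD2 hDnn); ring.
Qed.

End DemeanedTreatment.

(* Lemma 6: averaging E[Wdd_t^2] over t with [Er_Wdd_sq] and the time
   covariances [avg_dev_prod] leaves exactly the left-hand side of
   [weights_decomposition]. *)
Theorem lemma6 (d : measure_display) (Omega : measurableType d) (R : realType)
  (P : probability Omega R) (TT : nat) (Gs : {pred nat})
  (G : Omega -> nat) (D : Omega -> R)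
  (hT : (1 <= TT)%N)
  (hGs : forall g, g \in Gs -> (2 <= g <= TT.+1)%N)
  (hGval : forall w, G w \in Gs)
  (hGmeas : measurable_fun setT G)
  (hDmeas : measurable_fun setT D)
  (hD2 : P.-integrable setT (fun w => (D w ^+ 2)%:E))
  (hDnn : forall w, 0 <= D w)
  (hD0 : forall w, D w = 0 <-> G w = TT.+1)
  (hPD0 : (0 < P [set w | D w = 0%R]%classic)%E) :
  TT%:R^-1 * \sum_(1 <= t < TT.+1) Er P (fun w => Wdd P TT G D t w ^+ 2)
  = \sum_(2 <= g < TT.+2 | g \in Gs) w_within P TT G D g
    + \sum_(2 <= g < TT.+2 | g \in Gs) \sum_(2 <= k < TT.+2 | (k \in Gs) && (g < k)%N)
        (w_gpost P TT G D g k + w_kpost P TT G D g k + w_long P TT G D g k).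
Proof.
have Gs_range := adoption_range hGs.
have avg_dev g k : g \in Gs -> k \in Gs ->
    TT%:R^-1 * \sum_(1 <= t < TT.+1) (dev R TT g t * dev R TT k t) =
    Gbar TT (maxn g k) - Gbar TT g * Gbar TT k.
  by move=> Gg Gk; rewrite (avg_dev_prod R hT) ?Gs_range.
rewrite /w_within /w_gpost /w_kpost /w_long.
rewrite -(weights_decomposition (Gbar TT) (sum_pg hGs hGval hGmeas hDmeas hD2 hDnn)
  (varDg_moment hGs hGval hGmeas hDmeas hD2 hDnn)).
rewrite (eq_bigr _ (fun t _ => Er_Wdd_sq hT hGs hGval hGmeas hDmeas hD2 hDnn t)) sumrB mulrBr.
rewrite (avg_linear _ _ _ _ _ _ _ (fun g t => dev R TT g t ^+ 2)) avg_square.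
congr (_ - _); apply: eq_bigr => g Gg.
- by under eq_bigr do rewrite expr2; rewrite avg_dev // maxnn; ring.
- by apply: eq_bigr => k Gk; rewrite avg_dev // !(moment1_EDg P hGmeas hDmeas).
Qed.
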